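(* Let $A$ be a non-empty set and $\phi\in\ell_1(A)$, regarded as the functional $\phi(x^* )=\sum_{a\in A}\phi(a)x^*(a)$ on $\ell_\infty(A)$. Then the function $g_\phi:\ell_\infty(A)\to\mathbb R_+$, $g_\phi(x^* )=|\phi(|x^*|)|$, belongs to $FBL[\ell_1(A)]$.
   Context: For a real Banach space $E$ with dual $E^*$ and closed unit ball $B_E$, let $H[E]$ be the vector space of all positively homogeneous functions $f:E^*\to\mathbb R$ ($f(\lambda x^* )=\lambda f(x^* )$ for $\lambda>0$). For $f\in H[E]$ put $\|f\|_{FBL[E]}:=\sup\{\sum_{k=1}^n|f(x_k^* )| : n\in\mathbb N,\ x_1^*,\dots,x_n^*\in E^*,\ \sup_{x\in B_E}\sum_{k=1}^n|x_k^*(x)|\le 1\}$. $H_0[E]:=\{f\in H[E]:\|f\|_{FBL[E]}<\infty\}$ is a Banach lattice with this norm and pointwise order/operations. For $x\in E$ let $\delta_x(x^* )=x^*(x)$. $FBL[E]$ is the closed sublattice of $H_0[E]$ generated by $\{\delta_x:x\in E\}$. Here $E=\ell_1(A)$ with $E^*$ identified with $\ell_\infty(A)$. *)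

From HB Require Import structures.
From mathcomp Require Import all_boot all_order all_algebra.
From mathcomp Require Import all_classical all_reals all_analysis.
Set Implicit Arguments. Unset Strict Implicit. Unset Printing Implicit Defensive.
Import Order.TTheory GRing.Theory Num.Theory.
Local Open Scope classical_set_scope.
Local Open Scope ring_scope.

Section FBL.
Variables (R : realType) (A : choiceType).

(* sum over A of a (possibly signed) family: sum of positive parts minus
   sum of negative parts (the usual unconditional sum for absolutely
   summable families) *)
Definition sumA (u : A -> R) : R :=
  fine ((\esum_(a in [set: A]) ((fun b => (u b)%:E)^\+ a))
        - (\esum_(a in [set: A]) ((fun b => (u b)%:E)^\- a)))%E.

Definition l1 (x : A -> R) : Prop := (\esum_(a in [set: A]) (`|x a|)%:E < +oo)%E.
Definition l1norm (x : A -> R) : \bar R := (\esum_(a in [set: A]) (`|x a|)%:E)%E.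

Definition linf (xs : A -> R) : Prop := exists M : R, forall a, `|xs a| <= M.

Definition pairing (xs x : A -> R) : R := sumA (fun a => xs a * x a).

Definition delta (x : A -> R) : (A -> R) -> R := fun xs => pairing xs x.

Definition posHom (f : (A -> R) -> R) : Prop :=
  forall xs, linf xs -> forall l : R, 0 < l ->
    f (fun a => l * xs a) = l * f xs.

Definition admissible (s : seq (A -> R)) : Prop :=
  (forall xs, xs \in s -> linf xs) /\
  (forall x, l1 x -> (l1norm x <= 1)%E ->
     \sum_(xs <- s) `|pairing xs x| <= 1).

Definition fblnorm (f : (A -> R) -> R) : \bar R :=
  ereal_sup [set (\sum_(xs <- s) `|f xs|)%:E | s in admissible].

Definition H0 (f : (A -> R) -> R) : Prop := posHom f /\ (fblnorm f < +oo)%E.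

Definition closed_sublattice (S : set ((A -> R) -> R)) : Prop :=
  [/\ S `<=` H0,
      S (fun _ => 0),
      (forall f g, S f -> S g -> S (fun xs => f xs + g xs)),
      (forall (c : R) f, S f -> S (fun xs => c * f xs)) &
      [/\ (forall f g, S f -> S g -> S (fun xs => Num.max (f xs) (g xs))),
      (forall f g, S f -> S g -> S (fun xs => Num.min (f xs) (g xs))) &
      (forall f, H0 f ->
         (forall e : R, 0 < e -> exists2 g, S g &
            (fblnorm (fun xs => (f xs - g xs)%R) < e%:E)%E) -> S f)]].

(* FBL[E]: the closed sublattice of H_0[E] generated by {delta_x : x in E},
   i.e. the intersection of all closed sublattices containing them *)
Definition FBL (f : (A -> R) -> R) : Prop :=
  forall S, closed_sublattice S -> (forall x, l1 x -> S (delta x)) -> S f.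

End FBL.

(* g_phi is the FBL-norm limit of its truncations
   g_X(ξ) = |sum_(a in X) |ξ(a)| phi(a)|, X a finite subset of A, and each g_X lies
   in every closed sublattice containing the evaluations ξ |-> ξ(a) = δ_(e_a)(ξ).
   Testing admissibility of a family (ξ_k) on the unit vectors e_a gives
   sum_k |ξ_k(a)| <= 1, hence
   sum_k |g_phi(ξ_k) - g_X(ξ_k)| <= sum_k sum_(a not in X) |ξ_k(a)| |phi(a)|
                               <= sum_(a not in X) |phi(a)|,
   a tail of the summable family |phi|. *)

From HB Require Import structures.
From mathcomp Require Import all_boot all_order all_algebra.
From mathcomp Require Import all_classical all_reals all_analysis.
From mathcomp Require Import lra.
Import Order.TTheory GRing.Theory Num.Theory.
Local Open Scope classical_set_scope.
Local Open Scope ring_scope.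
Set Implicit Arguments. Unset Strict Implicit. Unset Printing Implicit Defensive.

Section esum_lemmas.
Variables (R : realType) (A : choiceType).
Implicit Types (D X : set A) (f : A -> R).

Lemma esumZl D (r : R) (F : A -> \bar R) : 0 <= r -> (forall a, 0 <= F a)%E ->
  (\esum_(a in D) (r%:E * F a) = r%:E * \esum_(a in D) F a)%E.
Proof.
move=> r0 F0; rewrite /esum -ereal_supZl//; last first.
  by apply/set0P; exists 0%E; exists set0; [exact: fsets_set0|rewrite fsbig_set0].
congr ereal_sup; apply/seteqP; split=> x /=.
  by move=> [X XD <-]; exists (\sum_(i \in X) F i)%E; [exists X|rewrite ge0_mule_fsumr].
by move=> [_ [X XD <-] <-]; exists X => //; rewrite ge0_mule_fsumr.
Qed.

Lemma esum_fsetC X f : finite_set X -> (forall a, 0 <= f a) ->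
  (\esum_(a in [set: A]) (f a)%:E =
   (\sum_(a \in X) f a)%:E + \esum_(a in ~` X) (f a)%:E)%E.
Proof.
move=> finX f0; rewrite (esumID X) => [|a _]; last by rewrite lee_fin.
by rewrite !setTI esum_fset ?fsumEFin// => a _; rewrite lee_fin.
Qed.

Lemma le_esum_setT D (F : A -> \bar R) : (forall a, 0 <= F a)%E ->
  (\esum_(a in D) F a <= \esum_(a in [set: A]) F a)%E.
Proof.
move=> F0; rewrite [leRHS](esumID D)// setTI leeDl//.
exact: esum_ge0.
Qed.

Lemma l1_fin_num_esum D (F : A -> \bar R) f : l1 f ->
  (forall a, 0 <= F a <= (`|f a|)%:E)%E -> (\esum_(a in D) F a \is a fin_num)%E.
Proof.
move=> lf Ff; rewrite ge0_fin_numE; last by apply: esum_ge0 => a _; case/andP: (Ff a).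
apply: le_lt_trans lf; apply: le_trans (le_esum_setT D _ ) => [|a]; last by rewrite lee_fin.
by apply: le_esum => a _; case/andP: (Ff a).
Qed.

Lemma l1_tail_lt f (e : R) : l1 f -> 0 < e ->
  exists2 X, finite_set X & (\esum_(a in ~` X) (`|f a|)%:E < e%:E)%E.
Proof.
move=> lf e0; have normf a : (0 <= (`|f a|)%:E <= (`|f a|)%:E)%E.
  by rewrite lee_fin normr_ge0 lexx.
have Tfin := l1_fin_num_esum [set: A] lf normf.
have : ((fine (\esum_(a in [set: A]) (`|f a|)%:E) - e)%:E
          < \esum_(a in [set: A]) (`|f a|)%:E)%E.
  by rewrite -[ltRHS](fineK Tfin) lte_fin gtrBl.
rewrite [in ltRHS]/esum => /ereal_sup_gt[_ [X [finX _] <-]].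
rewrite fsumEFin// lte_fin => sumX; exists X => //.
have tailfin := l1_fin_num_esum (~` X) lf normf.
move: sumX; rewrite (esum_fsetC finX) // -(fineK tailfin) -EFinD /= lte_fin.
lra.
Qed.

Lemma esum_finsupp X f : finite_set X -> (forall a, ~ X a -> f a = 0) ->
  (forall a, 0 <= f a) -> (\esum_(a in [set: A]) (f a)%:E = (\sum_(a \in X) f a)%:E)%E.
Proof.
by move=> finX f0 fge0; rewrite (esum_fsetC finX)// esum1 ?adde0// => a /f0 ->.
Qed.

End esum_lemmas.

Section funrposneg_pointwise.
Variables (R : realType) (A : choiceType).
Implicit Types (f : A -> R).

Lemma funrposBnegE f a : f^\+ a - f^\- a = f a.
Proof. exact: (congr1 (@^~ a) (funrposBneg f)). Qed.

Lemma funrposDnegE f a : f^\+ a + f^\- a = `|f a|.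
Proof. exact: (congr1 (@^~ a) (funrposDneg f)). Qed.

Lemma funrpos_le_norm f a : f^\+ a <= `|f a|.
Proof. by rewrite -funrposDnegE lerDl funrneg_ge0. Qed.

Lemma funrneg_le_norm f a : f^\- a <= `|f a|.
Proof. by rewrite -funrposDnegE lerDr funrpos_ge0. Qed.

End funrposneg_pointwise.

Section sumA_lemmas.
Variables (R : realType) (A : choiceType).
Implicit Types (D X : set A) (f : A -> R).

Lemma l1_fin_num_funrpos D f : l1 f -> (\esum_(a in D) (f^\+ a)%:E \is a fin_num)%E.
Proof.
by move=> lf; apply: (l1_fin_num_esum _ lf) => a; rewrite !lee_fin funrpos_ge0 funrpos_le_norm.
Qed.

Lemma l1_fin_num_funrneg D f : l1 f -> (\esum_(a in D) (f^\- a)%:E \is a fin_num)%E.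
Proof.
by move=> lf; apply: (l1_fin_num_esum _ lf) => a; rewrite !lee_fin funrneg_ge0 funrneg_le_norm.
Qed.

Lemma linf_norm (xs : A -> R) : linf xs -> linf (fun a => `|xs a|).
Proof. by case=> M HM; exists M => a; rewrite normr_id. Qed.

Lemma l1_linfM (xs : A -> R) f : linf xs -> l1 f -> l1 (fun a => xs a * f a).
Proof.
case=> M HM lf; apply: (@le_lt_trans _ _ (\esum_(a in [set: A]) (`|M|%:E * (`|f a|)%:E))%E).
  apply: le_esum => a _; rewrite -EFinM lee_fin normrM ler_wpM2r//.
  exact: le_trans (HM a) (ler_norm M).
by rewrite esumZl// lte_mul_pinfty// lee_fin.
Qed.

Lemma sumAE f : l1 f ->
  sumA f = fine (\esum_(a in [set: A]) (f^\+ a)%:E) - fine (\esum_(a in [set: A]) (f^\- a)%:E).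
Proof.
move=> lf; rewrite /sumA (_ : (fun b => (f b)%:E) = EFin \o f)// funerpos funerneg.
by rewrite fineB//; [exact: l1_fin_num_funrpos|exact: l1_fin_num_funrneg].
Qed.

Lemma sumA_fsum_dist f X : l1 f -> finite_set X ->
  `|sumA f - \sum_(a \in X) f a| <= fine (\esum_(a in ~` X) (`|f a|)%:E).
Proof.
move=> lf finX; rewrite sumAE// !(esum_fsetC finX) ?funrpos_ge0 ?funrneg_ge0//.
have finP := l1_fin_num_funrpos (~` X) lf.
have finN := l1_fin_num_funrneg (~` X) lf.
have -> : (\esum_(a in ~` X) (`|f a|)%:E =
    \esum_(a in ~` X) (f^\+ a)%:E + \esum_(a in ~` X) (f^\- a)%:E)%E.
  rewrite -esumD => [|a _|a _]; rewrite ?lee_fin ?funrpos_ge0 ?funrneg_ge0//.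
  by apply: eq_esum => a _; rewrite -EFinD funrposDnegE.
have -> : \sum_(a \in X) f a = \sum_(a \in X) f^\+ a - \sum_(a \in X) f^\- a.
  by rewrite !fsbig_finite//= -sumrB; apply: eq_bigr => a _; rewrite funrposBnegE.
have P0 : (0 <= \esum_(a in ~` X) (f^\+ a)%:E)%E.
  by apply: esum_ge0 => a _; rewrite lee_fin funrpos_ge0.
have N0 : (0 <= \esum_(a in ~` X) (f^\- a)%:E)%E.
  by apply: esum_ge0 => a _; rewrite lee_fin funrneg_ge0.
move: (fine_ge0 P0) (fine_ge0 N0).
rewrite -(fineK finP) -(fineK finN) -!EFinD /= => ? ?.
by rewrite ler_norml; apply/andP; split; lra.
Qed.

Lemma sumAZ (l : R) f : 0 <= l -> l1 f -> sumA (fun a => l * f a) = l * sumA f.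
Proof.
move=> l0 lf; have llf : l1 (fun a => l * f a).
  by apply: (l1_linfM (xs := fun=> l)) lf; exists `|l|.
rewrite !sumAE// ge0_funrposM// ge0_funrnegM//.
under eq_esum do rewrite EFinM.
under [X in _ - fine X]eq_esum do rewrite EFinM.
rewrite !esumZl// => [|a|a]; rewrite ?lee_fin ?funrpos_ge0 ?funrneg_ge0//.
rewrite !fineM// ?mulrBr//; [exact: l1_fin_num_funrneg|exact: l1_fin_num_funrpos].
Qed.

Lemma l1_finsupp X f : finite_set X -> (forall a, ~ X a -> f a = 0) -> l1 f.
Proof.
move=> finX f0; rewrite /l1 (esum_finsupp finX) ?ltry// => a /f0 ->.
by rewrite normr0.
Qed.

Lemma sumA_finsupp X f : finite_set X -> (forall a, ~ X a -> f a = 0) ->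
  sumA f = \sum_(a \in X) f a.
Proof.
move=> finX f0; apply/eqP; rewrite -subr_eq0 -normr_le0.
apply: le_trans (sumA_fsum_dist (l1_finsupp finX f0) finX) _.
by rewrite esum1// => a /f0 ->; rewrite normr0.
Qed.

End sumA_lemmas.

Section unit_vectors.
Variables (R : realType) (A : choiceType).

Definition ev (a : A) : A -> R := fun b => (b == a)%:R.

Lemma ev_supp a b : ~ [set a] b -> ev a b = 0.
Proof. by move=> /eqP /negbTE; rewrite /ev => ->. Qed.

Lemma l1_ev a : l1 (ev a).
Proof. exact: l1_finsupp (finite_set1 a) (@ev_supp a). Qed.

Lemma l1norm_ev a : l1norm (ev a) = 1%E.
Proof.
rewrite /l1norm (esum_finsupp (finite_set1 a)) ?fsbig_set1// => [|b /ev_supp ->].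
  by rewrite /ev eqxx normr1.
by rewrite normr0.
Qed.

Lemma pairing_ev xs a : pairing xs (ev a) = xs a.
Proof.
rewrite /pairing (sumA_finsupp (finite_set1 a)) ?fsbig_set1// => [|b /ev_supp ->].
  by rewrite /ev eqxx mulr1.
by rewrite mulr0.
Qed.

Lemma delta_ev a : delta (ev a) = fun xs => xs a.
Proof. by apply/funext => xs; rewrite /delta pairing_ev. Qed.

Lemma admissible_sum_norm_le1 (s : seq (A -> R)) a :
  admissible s -> \sum_(xs <- s) `|xs a| <= 1.
Proof.
case=> _ /(_ (ev a) (l1_ev a)); rewrite l1norm_ev lexx => /(_ isT).
by under eq_bigr do rewrite pairing_ev.
Qed.

Lemma admissible_sum_esum_le (s : seq (A -> R)) D (phi : A -> R) : admissible s ->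
  (\sum_(xs <- s) \esum_(a in D) (`|xs a| * `|phi a|)%:E <= \esum_(a in D) (`|phi a|)%:E)%E.
Proof.
move=> adm; rewrite -esum_sum => [|a xs _ _]; last by rewrite lee_fin mulr_ge0.
apply: le_esum => a _; rewrite sumEFin lee_fin -mulr_suml ler_piMl//.
exact: admissible_sum_norm_le1.
Qed.

End unit_vectors.

Section gphi.
Variables (R : realType) (A : choiceType) (phi : A -> R).
Hypothesis lphi : l1 phi.

Definition gphi (xs : A -> R) : R := `|pairing (fun a => `|xs a|) phi|.

Definition gphi_trunc (X : set A) (xs : A -> R) : R := `|\sum_(a \in X) `|xs a| * phi a|.

Lemma l1_normM (xs : A -> R) : linf xs -> l1 (fun a => `|xs a| * phi a).
Proof. by move=> /linf_norm/l1_linfM; apply. Qed.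

Lemma dist_gphi_trunc xs X : linf xs -> finite_set X ->
  `|gphi xs - gphi_trunc X xs| <= fine (\esum_(a in ~` X) (`|xs a| * `|phi a|)%:E).
Proof.
move=> hxs finX; apply: le_trans (ler_dist_dist _ _) _.
have := sumA_fsum_dist (l1_normM hxs) finX.
by under eq_esum do rewrite normrM normr_id.
Qed.

Lemma fblnorm_gphi_sub_trunc X : finite_set X ->
  (fblnorm (fun xs => (gphi xs - gphi_trunc X xs)%R) <= \esum_(a in ~` X) (`|phi a|)%:E)%E.
Proof.
move=> finX; apply: ge_ereal_sup => _ [s adm <-].
apply: le_trans (admissible_sum_esum_le _ phi adm).
rewrite -sumEFin big_seq [leRHS]big_seq; apply: lee_sum => xs /adm.1 hxs.
have fin : (\esum_(a in ~` X) (`|xs a| * `|phi a|)%:E \is a fin_num)%E.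
  apply: l1_fin_num_esum (l1_normM hxs) _ => a.
  by rewrite !lee_fin mulr_ge0//= normrM normr_id.
by rewrite -(fineK fin) lee_fin dist_gphi_trunc.
Qed.

Lemma posHom_gphi : posHom gphi.
Proof.
move=> xs hxs l l0; rewrite /gphi /pairing -[in RHS](gtr0_norm l0) -normrM.
rewrite -sumAZ ?ltW//; last exact: l1_normM.
by congr `|sumA _|; apply/funext => a; rewrite normrM gtr0_norm// mulrA.
Qed.

Lemma H0_gphi : H0 gphi.
Proof.
split; first exact: posHom_gphi.
have := fblnorm_gphi_sub_trunc (@finite_set0 A); rewrite setC0.
rewrite (_ : (fun xs => _) = gphi) => [bound|]; first exact: le_lt_trans bound lphi.
by apply/funext => xs; rewrite /gphi_trunc fsbig_set0 normr0 subr0.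
Qed.

End gphi.

Section closed_sublattice.
Variables (R : realType) (A : choiceType) (S : set ((A -> R) -> R)).
Hypothesis hS : closed_sublattice S.

Lemma closed_sublattice_norm f : S f -> S (fun xs => `|f xs|).
Proof.
case: hS => _ _ _ Sscale [Smax _ _] Sf.
have := Smax _ _ Sf (Sscale (-1) _ Sf).
by under eq_fun do rewrite mulN1r maxrN.
Qed.

Lemma closed_sublattice_sum (I : Type) (r : seq I) (F : I -> (A -> R) -> R) :
  (forall i, S (F i)) -> S (fun xs => \sum_(i <- r) F i xs).
Proof.
case: hS => _ S0 Sadd _ _ SF; elim: r => [|i r IHr].
  by under eq_fun do rewrite big_nil.
by under eq_fun do rewrite big_cons; exact: Sadd (SF i) IHr.
Qed.

Lemma closed_sublattice_gphi_trunc (phi : A -> R) X : finite_set X ->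
  (forall a, S (fun xs => xs a)) -> S (gphi_trunc phi X).
Proof.
move=> finX Seval; apply: closed_sublattice_norm.
under eq_fun do rewrite fsbig_finite//.
apply: closed_sublattice_sum => a.
case: hS => _ _ _ Sscale _; under eq_fun do rewrite mulrC.
exact/Sscale/closed_sublattice_norm.
Qed.

End closed_sublattice.

Theorem lemma4p8 (R : realType) (A : choiceType) (a0 : A)
  (phi : A -> R) (hphi : l1 phi) :
  FBL (fun xs : A -> R => `|pairing (fun a => `|xs a|) phi|).
Proof.
move=> S hS Sdelta; have Seval a : S (fun xs => xs a).
  by rewrite -delta_ev; exact/Sdelta/l1_ev.
have [_ _ _ _ [_ _ Sclosed]] := hS.
apply: Sclosed => [|e e0]; first exact: H0_gphi.
have [X finX tailX] := l1_tail_lt hphi e0.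
exists (gphi_trunc phi X); first exact: closed_sublattice_gphi_trunc.
exact: le_lt_trans (fblnorm_gphi_sub_trunc hphi finX) tailX.
Qed.
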